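(* Let $j\ge 1$ and consider the $j$-th flow of the type II hierarchy (defined in the context), i.e. the system $q_{t_j}=F_j[q,r]$, $r_{t_j}=G_j[q,r]$. Then this system admits the constraint $r=-\bar q$: for every smooth $q:\mathbb{R}^2\to\mathbb{C}$ one has the identity $$G_j[q,-\bar q]=-\overline{F_j[q,-\bar q]},$$ so that the constraint $r=-\bar q$ is preserved by the flow and the system reduces to a single evolution equation $q_{t_j}=F_j[q,-\bar q]$ for $q$ (for $j=2$ this is the Gerdjikov–Ivanov equation $q_t=\frac{i}{2}q_{xx}+\frac12 q^2\bar q_x+\frac{i}{4}|q|^4q$).
   Context: Let $a=\mathrm{diag}(i,-i)$. For smooth complex-valued functions $q(x,t)$, $r(x,t)$ set $u=\begin{pmatrix}0&q\\ r&0\end{pmatrix}$ and $P_0=\frac{i}{2}\begin{pmatrix}qr&0\\0&-qr\end{pmatrix}$. Consider formal series $Q=\sum_{k\le 2}Q_k\lambda^k$ in a formal parameter $\lambda$, whose coefficients $Q_k$ are traceless $2\times2$ matrices of smooth functions of $(x,t)$, with $Q_k$ diagonal for $k$ even and off-diagonal for $k$ odd. Let $Q$ be the unique such series with $Q_2=a$, $Q_1=u$, satisfying $[\partial_x+a\lambda^2+u\lambda+P_0,\;Q]=0$ (i.e. $\partial_x Q+[a\lambda^2+u\lambda+P_0,Q]=0$ coefficientwise) and $Q^2=-\lambda^4 I$; its coefficients are differential polynomials in $q,r$. The $j$-th flow of the ''type II hierarchy'' is $$u_{t_j}=\partial_x Q_{3-2j}+[P_0,Q_{3-2j}]+[u,Q_{2-2j}],$$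 whose right-hand side is off-diagonal, of the form $\begin{pmatrix}0&F_j[q,r]\\ G_j[q,r]&0\end{pmatrix}$ with $F_j,G_j$ differential polynomials in $q,r$; thus the flow is the system $q_{t_j}=F_j[q,r]$, $r_{t_j}=G_j[q,r]$. *)

From Stdlib Require Import Reals ZArith.
Open Scope R_scope.

Record Cplx := mkC { Re : R ; Im : R }.
Definition C0 : Cplx := mkC 0 0.
Definition C1 : Cplx := mkC 1 0.
Definition Ci : Cplx := mkC 0 1.
Definition Chalf : Cplx := mkC (1/2) 0.
Definition Cadd (z w : Cplx) : Cplx := mkC (Re z + Re w) (Im z + Im w).
Definition Copp (z : Cplx) : Cplx := mkC (- Re z) (- Im z).
Definition Cmul (z w : Cplx) : Cplx :=
  mkC (Re z * Re w - Im z * Im w) (Re z * Im w + Im z * Re w).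
Definition Cconj (z : Cplx) : Cplx := mkC (Re z) (- Im z).

Record M2 := mkM2 { e11 : Cplx ; e12 : Cplx ; e21 : Cplx ; e22 : Cplx }.
Definition M0 : M2 := mkM2 C0 C0 C0 C0.
Definition MI : M2 := mkM2 C1 C0 C0 C1.
Definition Madd (A B : M2) : M2 :=
  mkM2 (Cadd (e11 A) (e11 B)) (Cadd (e12 A) (e12 B))
       (Cadd (e21 A) (e21 B)) (Cadd (e22 A) (e22 B)).
Definition Mopp (A : M2) : M2 :=
  mkM2 (Copp (e11 A)) (Copp (e12 A)) (Copp (e21 A)) (Copp (e22 A)).
Definition Mmul (A B : M2) : M2 :=
  mkM2 (Cadd (Cmul (e11 A) (e11 B)) (Cmul (e12 A) (e21 B)))
       (Cadd (Cmul (e11 A) (e12 B)) (Cmul (e12 A) (e22 B)))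
       (Cadd (Cmul (e21 A) (e11 B)) (Cmul (e22 A) (e21 B)))
       (Cadd (Cmul (e21 A) (e12 B)) (Cmul (e22 A) (e22 B))).
Definition Mcomm (A B : M2) : M2 := Madd (Mmul A B) (Mopp (Mmul B A)).

Definition traceless (A : M2) : Prop := Cadd (e11 A) (e22 A) = C0.
Definition diagonal (A : M2) : Prop := e12 A = C0 /\ e21 A = C0.
Definition offdiagonal (A : M2) : Prop := e11 A = C0 /\ e22 A = C0.

Definition aM : M2 := mkM2 Ci C0 C0 (Copp Ci).
Definition uM (q r : Cplx) : M2 := mkM2 C0 q r C0.
Definition P0M (q r : Cplx) : M2 :=
  let c := Cmul (Cmul Ci Chalf) (Cmul q r) in mkM2 c C0 C0 (Copp c).

(* A real function of (x,t) all of whose iterated partial derivatives exist: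
   D m n plays the role of d_x^m d_t^n f. *)
Definition SmoothR2 (f : R -> R -> R) : Prop :=
  exists D : nat -> nat -> R -> R -> R,
    D 0%nat 0%nat = f /\
    forall m n x t,
      derivable_pt_lim (fun y => D m n y t) x (D (S m) n x t) /\
      derivable_pt_lim (fun s => D m n x s) t (D m (S n) x t).

Definition SmoothC (f : R -> R -> Cplx) : Prop :=
  SmoothR2 (fun x t => Re (f x t)) /\ SmoothR2 (fun x t => Im (f x t)).

Definition SmoothM (A : R -> R -> M2) : Prop :=
  SmoothC (fun x t => e11 (A x t)) /\ SmoothC (fun x t => e12 (A x t)) /\
  SmoothC (fun x t => e21 (A x t)) /\ SmoothC (fun x t => e22 (A x t)).

Definition HasDxC (f g : R -> R -> Cplx) : Prop :=
  forall x t,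
    derivable_pt_lim (fun y => Re (f y t)) x (Re (g x t)) /\
    derivable_pt_lim (fun y => Im (f y t)) x (Im (g x t)).

Definition HasDxM (A B : R -> R -> M2) : Prop :=
  HasDxC (fun x t => e11 (A x t)) (fun x t => e11 (B x t)) /\
  HasDxC (fun x t => e12 (A x t)) (fun x t => e12 (B x t)) /\
  HasDxC (fun x t => e21 (A x t)) (fun x t => e21 (B x t)) /\
  HasDxC (fun x t => e22 (A x t)) (fun x t => e22 (B x t)).

Fixpoint msum (f : nat -> M2) (N : nat) : M2 :=
  match N with
  | O => f O
  | S n => Madd (msum f n) (f (S n))
  end.

(* coefficient of lambda^m in Q^2 (Q_k = 0 for k > 2, so the sum is finite:
   Q_{m-2} Q_2 + Q_{m-1} Q_1 + ... + Q_2 Q_{m-2}) *)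
Definition sq_coeff (Q : Z -> M2) (m : Z) : M2 :=
  if (m <=? 4)%Z then
    msum (fun n => Mmul (Q (m - 2 + Z.of_nat n)%Z) (Q (2 - Z.of_nat n)%Z))
         (Z.to_nat (4 - m))
  else M0.

(* Q : coefficients (as matrix functions of (x,t)), dQ : their x-derivatives.
   IsTypeIIQ q r Q dQ says Q is a series with the properties characterising
   the (unique) series of the type II hierarchy. *)
Record IsTypeIIQ (q r : R -> R -> Cplx) (Q dQ : Z -> R -> R -> M2) : Prop := {
  Q_top    : forall k x t, (2 < k)%Z -> Q k x t = M0;
  Q_2      : forall x t, Q 2%Z x t = aM;
  Q_1      : forall x t, Q 1%Z x t = uM (q x t) (r x t);
  Q_smooth : forall k, SmoothM (Q k);
  Q_dx     : forall k, HasDxM (Q k) (dQ k);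
  Q_trace  : forall k x t, traceless (Q k x t);
  Q_parity : forall k x t,
      (Z.even k = true -> diagonal (Q k x t)) /\
      (Z.even k = false -> offdiagonal (Q k x t));
  (* [d_x + a lambda^2 + u lambda + P0, Q] = 0, coefficient of lambda^m *)
  Q_comm   : forall m x t,
      Madd (Madd (dQ m x t) (Mcomm aM (Q (m - 2)%Z x t)))
           (Madd (Mcomm (uM (q x t) (r x t)) (Q (m - 1)%Z x t))
                 (Mcomm (P0M (q x t) (r x t)) (Q m x t))) = M0;
  (* Q^2 = - lambda^4 I, coefficient of lambda^m *)
  Q_square : forall m x t,
      sq_coeff (fun k => Q k x t) m = if (m =? 4)%Z then Mopp MI else M0
}.

Definition flowRHS (j : nat) (q r : R -> R -> Cplx) (Q dQ : Z -> R -> R -> M2)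
  (x t : R) : M2 :=
  let k := (3 - 2 * Z.of_nat j)%Z in
  Madd (Madd (dQ k x t) (Mcomm (P0M (q x t) (r x t)) (Q k x t)))
       (Mcomm (uM (q x t) (r x t)) (Q (2 - 2 * Z.of_nat j)%Z x t)).

(** The reduction [r = -conj q] makes [u] and [P0] anti-Hermitian, as is [a], and
    anti-Hermitian matrices are closed under sums, commutators and x-derivatives.
    So every [Q_k] is anti-Hermitian, by downward induction on [k].  For odd [k] the
    coefficient of [lambda^(k+2)] in the zero-curvature equation expresses [[a, Q_k]]
    through anti-Hermitian matrices, and [[a, .]] detects anti-Hermitian off-diagonal
    matrices.  For even [k], [Q_k = diag(c, -c)], and the imaginary part of the trace
    of the coefficient of [lambda^(k+2)] in [Q^2 = -lambda^4] is [4 Re c], since the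
    trace of a product of two anti-Hermitian matrices is real.  The right-hand side
    of each flow is then anti-Hermitian, which for an off-diagonal matrix is the
    identity [G = -conj F]. *)
From Stdlib Require Import Reals ZArith Zwf Lia Lra FunctionalExtensionality.
Open Scope R_scope.

Definition antihermitian (A : M2) : Prop :=
  Re (e11 A) = 0 /\ Re (e22 A) = 0 /\ e21 A = Copp (Cconj (e12 A)).

Definition Im_trace (A : M2) : R := Im (Cadd (e11 A) (e22 A)).

Ltac destruct_M2 A := destruct A as [[? ?] [? ?] [? ?] [? ?]].

Ltac unfold_M2 := unfold antihermitian, Im_trace, offdiagonal, diagonal, traceless,
  Madd, Mcomm, Mmul, Mopp, M0, aM, uM, P0M,
  Cadd, Cmul, Copp, Cconj, C0, Ci, Chalf in *; simpl in *.

Ltac destruct_antihermitian H :=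
  let Hre11 := fresh "Hre" in let Hre22 := fresh "Hre" in let H21 := fresh "H" in
  unfold_M2; destruct H as [Hre11 [Hre22 H21]]; injection H21 as -> ->; subst.

Ltac solve_M2 := unfold_M2; repeat split; try f_equal; ring.

Lemma antihermitian_Madd A B :
  antihermitian A -> antihermitian B -> antihermitian (Madd A B).
Proof.
  destruct_M2 A; destruct_M2 B; intros HA HB.
  destruct_antihermitian HA; destruct_antihermitian HB; solve_M2.
Qed.

Lemma antihermitian_Mcomm A B :
  antihermitian A -> antihermitian B -> antihermitian (Mcomm A B).
Proof.
  destruct_M2 A; destruct_M2 B; intros HA HB.
  destruct_antihermitian HA; destruct_antihermitian HB; solve_M2.
Qed.

Lemma antihermitian_M0 : antihermitian M0.
Proof. solve_M2. Qed.

Lemma antihermitian_aM : antihermitian aM.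
Proof. solve_M2. Qed.

Lemma antihermitian_uM q : antihermitian (uM q (Copp (Cconj q))).
Proof. destruct q; solve_M2. Qed.

Lemma antihermitian_P0M q : antihermitian (P0M q (Copp (Cconj q))).
Proof. destruct q; solve_M2. Qed.

Lemma antihermitian_Madd_eq0 A X B :
  Madd (Madd A X) B = M0 -> antihermitian A -> antihermitian B -> antihermitian X.
Proof.
  destruct_M2 A; destruct_M2 X; destruct_M2 B; intros HX HA HB.
  destruct_antihermitian HA; destruct_antihermitian HB.
  injection HX as ? ? ? ? ? ? ? ?; repeat split; try f_equal; lra.
Qed.

Lemma antihermitian_Mcomm_aM A :
  offdiagonal A -> antihermitian (Mcomm aM A) -> antihermitian A.
Proof.
  destruct_M2 A; intros [H11 H22] HA; unfold_M2.
  injection H11 as -> ->; injection H22 as -> ->.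
  destruct HA as [_ [_ H21]]; injection H21 as ? ?.
  repeat split; try f_equal; lra.
Qed.

Lemma Im_trace_Mmul_antihermitian A B :
  antihermitian A -> antihermitian B -> Im_trace (Mmul A B) = 0.
Proof.
  destruct_M2 A; destruct_M2 B; intros HA HB.
  destruct_antihermitian HA; destruct_antihermitian HB; ring.
Qed.

Lemma antihermitian_diagonal_traceless A :
  diagonal A -> traceless A ->
  Im_trace (Mmul A aM) + Im_trace (Mmul aM A) = 0 -> antihermitian A.
Proof.
  destruct_M2 A; intros [H12 H21] Htr HIm; unfold_M2.
  injection H12 as -> ->; injection H21 as -> ->; injection Htr as ? ?.
  repeat split; try f_equal; lra.
Qed.

Lemma Im_trace_msum f N :
  Im_trace (msum f N) = sum_f_R0 (fun n => Im_trace (f n)) N.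
Proof.
  induction N as [|N IHN]; [reflexivity|].
  simpl; rewrite <- IHN; unfold Im_trace; simpl; ring.
Qed.

Lemma sum_f_R0_ends (f : nat -> R) N :
  (1 <= N)%nat -> (forall n, (0 < n < N)%nat -> f n = 0) ->
  sum_f_R0 f N = f O + f N.
Proof.
  induction N as [|N IHN]; intros HN Hmid; [lia|].
  destruct N as [|N]; [reflexivity|].
  rewrite tech5, IHN by (lia || (intros; apply Hmid; lia)).
  rewrite (Hmid (S N)) by lia; ring.
Qed.

Lemma derivable_pt_lim_scal_uniq (f g : R -> R) c x df dg :
  derivable_pt_lim f x df -> derivable_pt_lim g x dg ->
  (forall y, f y = c * g y) -> df = c * dg.
Proof.
  intros Hf Hg Hfg.
  apply (uniqueness_limite f x); [exact Hf|].
  replace f with (mult_real_fct c g) by (extensionality y; symmetry; apply Hfg).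
  exact (derivable_pt_lim_scal g c x dg Hg).
Qed.

Lemma antihermitian_HasDxM (F G : R -> R -> M2) :
  HasDxM F G -> (forall x t, antihermitian (F x t)) ->
  forall x t, antihermitian (G x t).
Proof.
  intros [H11 [H12 [H21 H22]]] HF x t.
  destruct (H11 x t) as [D11 _], (H22 x t) as [D22 _].
  destruct (H12 x t) as [D12re D12im], (H21 x t) as [D21re D21im].
  split; [|split].
  - rewrite (derivable_pt_lim_scal_uniq _ _ 0 _ _ _ D11 D11); [ring|].
    intros y; rewrite (proj1 (HF y t)); ring.
  - rewrite (derivable_pt_lim_scal_uniq _ _ 0 _ _ _ D22 D22); [ring|].
    intros y; rewrite (proj1 (proj2 (HF y t))); ring.
  - assert (Hre : forall y, Re (e21 (F y t)) = -1 * Re (e12 (F y t))).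
    { intros y; rewrite (proj2 (proj2 (HF y t))); simpl; ring. }
    assert (Him : forall y, Im (e21 (F y t)) = 1 * Im (e12 (F y t))).
    { intros y; rewrite (proj2 (proj2 (HF y t))); simpl; ring. }
    pose proof (derivable_pt_lim_scal_uniq _ _ _ _ _ _ D21re D12re Hre) as Hdre.
    pose proof (derivable_pt_lim_scal_uniq _ _ _ _ _ _ D21im D12im Him) as Hdim.
    destruct (e21 (G x t)), (e12 (G x t)); simpl in Hdre, Hdim.
    unfold Copp, Cconj; simpl; f_equal; lra.
Qed.

Lemma Z_ind_downward (P : Z -> Prop) (c : Z) :
  (forall k, (c < k)%Z -> P k) ->
  (forall k, (k <= c)%Z -> (forall k', (k < k')%Z -> P k') -> P k) ->
  forall k, P k.
Proof.
  intros Hbase Hstep k.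
  destruct (Z_lt_le_dec c k) as [Hk|Hk]; [exact (Hbase k Hk)|].
  revert Hk; induction k as [k IH] using (well_founded_ind (Zwf_up_well_founded c)).
  intros Hk; apply (Hstep k Hk); intros k' Hk'.
  destruct (Z_lt_le_dec c k') as [Hk''|Hk'']; [exact (Hbase k' Hk'')|].
  apply IH; [unfold Zwf_up; lia | exact Hk''].
Qed.

Section ReducedSeries.

Variables (q : R -> R -> Cplx) (Q dQ : Z -> R -> R -> M2).
Let r : R -> R -> Cplx := fun x t => Copp (Cconj (q x t)).
Hypothesis HQ : IsTypeIIQ q r Q dQ.

Let antihermitian_above (k : Z) : Prop :=
  forall k', (k < k')%Z -> forall x t, antihermitian (Q k' x t).

Lemma Q_odd_antihermitian k x t :
  Z.even k = false -> antihermitian_above k -> antihermitian (Q k x t).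
Proof.
  intros Hodd Habove.
  apply antihermitian_Mcomm_aM; [exact (proj2 (Q_parity _ _ _ _ HQ k x t) Hodd)|].
  pose proof (Q_comm _ _ _ _ HQ (k + 2)%Z x t) as Hcomm.
  replace (k + 2 - 2)%Z with k in Hcomm by lia.
  replace (k + 2 - 1)%Z with (k + 1)%Z in Hcomm by lia.
  apply (antihermitian_Madd_eq0 _ _ _ Hcomm).
  - apply (antihermitian_HasDxM _ _ (Q_dx _ _ _ _ HQ _)).
    intros; apply Habove; lia.
  - apply antihermitian_Madd; apply antihermitian_Mcomm;
      (apply antihermitian_uM || apply antihermitian_P0M || (apply Habove; lia)).
Qed.

(* Only the end terms [Q_k Q_2] and [Q_2 Q_k] of the coefficient of [lambda^(k+2)]
   in [Q^2] can contribute to the imaginary part of its trace. *)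
Lemma Q_even_antihermitian k x t :
  (k <= 0)%Z -> Z.even k = true -> antihermitian_above k -> antihermitian (Q k x t).
Proof.
  intros Hk Heven Habove.
  pose proof (Q_square _ _ _ _ HQ (k + 2)%Z x t) as Hsq.
  unfold sq_coeff in Hsq.
  rewrite (proj2 (Z.leb_le _ _)), (proj2 (Z.eqb_neq _ _)) in Hsq by lia.
  apply (f_equal Im_trace) in Hsq; rewrite Im_trace_msum in Hsq.
  set (N := Z.to_nat (4 - (k + 2))) in Hsq.
  assert (HN : Z.of_nat N = (2 - k)%Z) by (unfold N; rewrite Z2Nat.id; lia).
  rewrite sum_f_R0_ends in Hsq; [| lia |].
  2: { intros n Hn; apply Im_trace_Mmul_antihermitian; apply Habove; lia. }
  replace (k + 2 - 2 + Z.of_nat 0)%Z with k in Hsq by (simpl; lia).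
  replace (k + 2 - 2 + Z.of_nat N)%Z with 2%Z in Hsq by lia.
  replace (2 - Z.of_nat N)%Z with k in Hsq by lia.
  rewrite !(Q_2 _ _ _ _ HQ) in Hsq.
  replace (Im_trace M0) with 0 in Hsq by (unfold_M2; ring).
  apply antihermitian_diagonal_traceless; [| exact (Q_trace _ _ _ _ HQ k x t) | exact Hsq].
  exact (proj1 (Q_parity _ _ _ _ HQ k x t) Heven).
Qed.

Lemma Q_antihermitian k x t : antihermitian (Q k x t).
Proof.
  revert k x t; apply (Z_ind_downward (fun k => forall x t, antihermitian (Q k x t)) 1).
  - intros k Hk x t; destruct (Z.eq_dec k 2) as [->|Hk2].
    + rewrite (Q_2 _ _ _ _ HQ); apply antihermitian_aM.
    + rewrite (Q_top _ _ _ _ HQ) by lia; apply antihermitian_M0.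
  - intros k Hk Habove x t; destruct (Z.even k) eqn:Hpar.
    + apply Q_even_antihermitian; [| exact Hpar | exact Habove].
      destruct (Z.eq_dec k 1) as [->|]; [discriminate | lia].
    + exact (Q_odd_antihermitian k x t Hpar Habove).
Qed.

Lemma flowRHS_antihermitian j x t : antihermitian (flowRHS j q r Q dQ x t).
Proof.
  unfold flowRHS; apply antihermitian_Madd; [apply antihermitian_Madd|].
  - apply (antihermitian_HasDxM _ _ (Q_dx _ _ _ _ HQ _)), Q_antihermitian.
  - apply antihermitian_Mcomm; [apply antihermitian_P0M | apply Q_antihermitian].
  - apply antihermitian_Mcomm; [apply antihermitian_uM | apply Q_antihermitian].
Qed.

End ReducedSeries.

Theorem mainTheorem1 (j : nat) (q : R -> R -> Cplx) (Q dQ : Z -> R -> R -> M2) :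
  (1 <= j)%nat ->
  SmoothC q ->
  IsTypeIIQ q (fun x t => Copp (Cconj (q x t))) Q dQ ->
  forall x t : R,
    e21 (flowRHS j q (fun x t => Copp (Cconj (q x t))) Q dQ x t)
    = Copp (Cconj (e12 (flowRHS j q (fun x t => Copp (Cconj (q x t))) Q dQ x t))).
Proof.
  intros _ _ HQ x t.
  exact (proj2 (proj2 (flowRHS_antihermitian q Q dQ HQ j x t))).
Qed.
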